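(* For every dimension $d\ge 2$, Algorithm ExtDrift (defined in the context) is $3$-competitive for the line chasing problem in $\mathbb{R}^d$: for every initial point $P_0\in\mathbb{R}^d$ and every finite sequence of lines $X_1,\dots,X_m$ in $\mathbb{R}^d$, the path $P_0,P_1,\dots,P_m$ produced by ExtDrift satisfies $\sum_{t=1}^m |P_{t-1}P_t| \le 3\cdot\mathrm{OPT}$, where $\mathrm{OPT}=\min\{\sum_{t=1}^m |A_{t-1}A_t| : A_0=P_0,\ A_t\in X_t\}$.
   Context: $|XY|$ denotes Euclidean distance. Line chasing problem: given an initial point $P_0\in\mathbb{R}^d$ and lines $X_1,\dots,X_m$ revealed one at a time, an online algorithm must, upon seeing $X_t$ (and not later lines), choose $P_t\in X_t$; its cost is $\sum_t|P_{t-1}P_t|$. It is $c$-competitive if its cost is at most $c\cdot\mathrm{OPT}$ on every input. Planar Algorithm Drift: given a previous line $L$ in a plane, current point $P\in L$, and new line $L'$ in that plane, for $X\in L$ let $\bar X$ be the orthogonal projection of $X$ onto $L'$. If $L'$ does not meet $L$ in a single point, move to $\bar P$. Otherwise let $S=L\cap L'$, $r=|SP|$, $h=|P\bar P|$, $s=|S\bar P|$, $x=\frac{1}{\sqrt2}(h+s-r)$, and move to the point $P'\in L'$ on the ray from $S$ through $\bar P$ (or $P'=S$ if $\bar P=S$) with $|SP'|=s-x$. Algorithm ExtDrift (in $\mathbb{R}^d$): let $L$ be the previous request line (for the first request, an arbitrary fixed line through $P_0$), $P\in L$ the current position, and $L'$ the new request. If $P\in L'$, stay at $P$. Otherwise let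 $U$ be the unique 2-dimensional plane containing $L'$ and $P$, and make the move prescribed by Drift within $U$ for the current point $P$, new line $L'$, and previous line equal to the orthogonal projection of $L$ onto $U$ (if this projection is the single point $P$, an arbitrary line in $U$ through $P$ is used). *)

From HB Require Import structures.
From mathcomp Require Import all_boot all_order all_algebra.
From mathcomp Require Import reals.
Set Implicit Arguments. Unset Strict Implicit. Unset Printing Implicit Defensive.
Import Order.TTheory GRing.Theory Num.Theory.
Local Open Scope ring_scope.

Section LineChasing.
Variables (R : realType) (d : nat).
Notation pt := 'rV[R]_d.

Definition dotp (u v : pt) : R := (u *m v^T) 0 0.
Definition dist (x y : pt) : R := Num.sqrt (dotp (x - y) (x - y)).

(* A line is given by a point and a direction vector (required to be nonzero
   wherever a line is used); as a set it is { p + t v | t in R }. *)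
Definition line := (pt * pt)%type.
Definition is_line (L : line) : Prop := L.2 != 0.
Definition on_line (L : line) (x : pt) : Prop := exists t : R, x = L.1 + t *: L.2.

Definition proj_line (L : line) (x : pt) : pt :=
  L.1 + (dotp (x - L.1) L.2 / dotp L.2 L.2) *: L.2.

(* The point P' of Algorithm Drift in the case L meets L' in the single
   point S: with r = |SP|, h = |P Pbar|, s = |S Pbar|, x = (h+s-r)/sqrt 2,
   P' is on the ray from S through Pbar with |SP'| = s - x (P' = S if Pbar = S). *)
Definition drift_point (S P Pb : pt) : pt :=
  let r := dist S P in let h := dist P Pb in let s := dist S Pb in
  let x := (h + s - r) / Num.sqrt 2 in
  if s == 0 then S else S + ((s - x) / s) *: (Pb - S).

Definition drift_step (L : line) (P : pt) (L' : line) (P' : pt) : Prop :=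
  let Pb := proj_line L' P in
  (~ (exists S, [/\ on_line L S, on_line L' S &
        forall S2, on_line L S2 -> on_line L' S2 -> S2 = S]) -> P' = Pb) /\
  (forall S, on_line L S -> on_line L' S ->
     (forall S2, on_line L S2 -> on_line L' S2 -> S2 = S) ->
     P' = drift_point S P Pb).

(* The 2-plane U containing L' and P (P not on L'): U = { P + a v' + b n }
   where v' is the direction of L' and n = P - Pbar (orthogonal to v'). *)
Definition plane_normal (L' : line) (P : pt) : pt := P - proj_line L' P.
Definition on_plane (L' : line) (P x : pt) : Prop :=
  exists a b : R, x = P + a *: L'.2 + b *: plane_normal L' P.
Definition proj_dir (L' : line) (P w : pt) : pt :=
  let n := plane_normal L' P in
  (dotp w L'.2 / dotp L'.2 L'.2) *: L'.2 + (dotp w n / dotp n n) *: n.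
Definition proj_plane (L' : line) (P y : pt) : pt := P + proj_dir L' P (y - P).

(* L0 is an admissible "previous line" for Drift inside U: the orthogonal
   projection of L onto U if that projection is a line, and otherwise
   (projection is the single point P) an arbitrary line in U through P. *)
Definition prev_line_in_plane (L : line) (P : pt) (L' : line) (L0 : line) : Prop :=
  is_line L0 /\
  ((exists2 y, on_line L y & forall z, on_line L z -> proj_plane L' P z = proj_plane L' P y) ->
     on_line L0 P /\ forall x, on_line L0 x -> on_plane L' P x) /\
  (~ (exists2 y, on_line L y & forall z, on_line L z -> proj_plane L' P z = proj_plane L' P y) ->
     forall x, on_line L0 x <-> exists2 y, on_line L y & x = proj_plane L' P y).

Definition extdrift_step (L : line) (P : pt) (L' : line) (P' : pt) : Prop :=
  (on_line L' P -> P' = P) /\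
  (~ on_line L' P -> exists L0, prev_line_in_plane L P L' L0 /\ drift_step L0 P L' P').

(* P 0, ..., P m is a run of ExtDrift on initial point P0 and requests
   X 1, ..., X m (every admissible resolution of the arbitrary choices). *)
Definition extdrift_run (P0 : pt) (m : nat) (X : nat -> line) (P : nat -> pt) : Prop :=
  P 0%N = P0 /\
  exists L1 : line, [/\ is_line L1, on_line L1 P0 &
    forall t, (t < m)%N -> extdrift_step (if t == 0%N then L1 else X t) (P t) (X t.+1) (P t.+1)].

Definition path_cost (m : nat) (A : nat -> pt) : R := \sum_(t < m) dist (A t) (A t.+1).

End LineChasing.

(* For any offline path A, the potential Phi = sqrt 3 * |P A| satisfies
   |P P'| + Phi' <= Phi + 3 |A A'| at every request, which telescopes to the bound.
   ExtDrift reduces this step to the planar one: the orthogonal projection onto the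
   plane U is 1-Lipschitz, fixes P and the new line L', and maps the old line into
   the line used by Drift.  In the plane, if that line is parallel to L', Drift moves
   to the foot of the perpendicular and the inequality follows from the triangle
   inequality and h + sqrt 3 y <= 2 sqrt (h^2 + y^2).  Otherwise it meets L' in S,
   and in coordinates along L' with origin S the step becomes a real inequality in
   r = |SP|, s = |S Pbar|, h = |P Pbar| and the offline positions; it follows from
   a case split on whether A' lies behind P' and, if not, on whether 3s <= r. *)

From HB Require Import structures.
From mathcomp Require Import all_boot all_order all_algebra.
From mathcomp Require Import boolp reals.
From mathcomp.algebra_tactics Require Import ring lra.
Import Order.TTheory GRing.Theory Num.Theory.
Local Open Scope ring_scope.

(** * Real inequalities behind a Drift step *)

Section DriftInequalities.
Context {R : rcfType}.
Implicit Types a r s h x y D M N U : R.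

Lemma ler_sqrt3M [x y] : 0 <= y -> x ^+ 2 <= 3 * y ^+ 2 -> x <= Num.sqrt 3 * y.
Proof.
move=> y0 le_xy; apply: le_trans (ler_norm x) _.
rewrite -sqrtr_sqr -[y in _ * y](@ger0_norm _ y) // -sqrtr_sqr -sqrtrM //.
by rewrite ler_sqrt // mulr_ge0 // sqr_ge0.
Qed.

Lemma sqrt3M_le [x y] : 0 <= y -> x ^+ 2 <= 3 * y ^+ 2 -> Num.sqrt 3 * x <= 3 * y.
Proof.
move=> y0 /(ler_sqrt3M y0) le_xy.
have -> : 3 * y = Num.sqrt 3 * (Num.sqrt 3 * y) by rewrite mulrA -expr2 sqr_sqrtr.
by rewrite ler_wpM2l ?sqrtr_ge0.
Qed.

Lemma right_triangle_le [r s h] : 0 <= r -> 0 <= s -> 0 <= h ->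
  r ^+ 2 = s ^+ 2 + h ^+ 2 -> [/\ s <= r, h <= r & r <= s + h].
Proof.
move=> r0 s0 h0 pyth.
rewrite -[s <= r]ler_sqr -?[h <= r]ler_sqr -?[r <= _]ler_sqr ?nnegrE ?addr_ge0 // pyth.
rewrite lerDl lerDr !sqr_ge0 sqrrD -addrA lerD2l lerDr.
by rewrite mulrn_wge0 // mulr_ge0.
Qed.

Definition drift_offset r s h := (h + s - r) / Num.sqrt 2.

Lemma sqrt2M_drift_offset r s h : Num.sqrt 2 * drift_offset r s h = h + s - r.
Proof. by rewrite /drift_offset mulrC divfK // gt_eqF ?sqrtr_gt0. Qed.

Lemma drift_offset_bounds [r s h] (x := drift_offset r s h) : r <= s + h ->
  [/\ 0 <= x, x <= h + s - r, h + s - r <= 3 * x & 2 * x ^+ 2 = (h + s - r) ^+ 2].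
Proof.
move=> rsh; have e0 : 0 <= h + s - r by lra.
have K2 : Num.sqrt 2 ^+ 2 = 2 :> R by rewrite sqr_sqrtr.
have K0 : 0 < Num.sqrt 2 :> R by rewrite sqrtr_gt0.
have Kx := sqrt2M_drift_offset r s h; rewrite -/x in Kx.
have x0 : 0 <= x by rewrite /x /drift_offset divr_ge0 // ltW.
clearbody x.
split => //; [nra | nra | by rewrite -Kx exprMn K2].
Qed.

Lemma drift_move_le_dec [r s h] (x := drift_offset r s h) :
  0 <= r -> 0 <= s -> 0 <= h -> r ^+ 2 = s ^+ 2 + h ^+ 2 ->
  x ^+ 2 + h ^+ 2 <= 3 * (r - (s - x)) ^+ 2.
Proof.
move=> r0 s0 h0 pyth; have [sr _ rsh] := right_triangle_le r0 s0 h0 pyth.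
have [_ _ ex x2] := drift_offset_bounds rsh; rewrite -/x in ex x2.
clearbody x.
have q0 : 0 <= r - s by rewrite subr_ge0.
have e3x : 0 <= 3 * x - (h + s - r) by rewrite subr_ge0.
have := mulr_ge0 q0 e3x; have := sqr_ge0 (r - s); nra.
Qed.

Lemma drift_move_le_inc [r s h] (x := drift_offset r s h) :
  0 <= r -> 0 <= s -> 0 <= h -> r ^+ 2 = s ^+ 2 + h ^+ 2 ->
  x ^+ 2 + h ^+ 2 <= 3 * (r + (s - x)) ^+ 2.
Proof.
move=> r0 s0 h0 pyth; have [sr hr rsh] := right_triangle_le r0 s0 h0 pyth.
have [x0 xe _ _] := drift_offset_bounds rsh; rewrite -/x in x0 xe.
clearbody x; have xs : x <= s by lra.
have xr : x ^+ 2 <= r ^+ 2 by rewrite ler_sqr ?nnegrE // (le_trans xs).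
have hr2 : h ^+ 2 <= r ^+ 2 by rewrite ler_sqr ?nnegrE.
have : r ^+ 2 <= (r + (s - x)) ^+ 2.
  by rewrite ler_sqr ?nnegrE ?lerDl ?subr_ge0 // addr_ge0 ?subr_ge0.
have := sqr_ge0 (r + (s - x)); lra.
Qed.

Lemma drift_move_le_far [r s h] (x := drift_offset r s h) :
  0 <= r -> 0 <= s -> 0 <= h -> r ^+ 2 = s ^+ 2 + h ^+ 2 ->
  x ^+ 2 + h ^+ 2 <= 3 * (Num.sqrt 2 * h - x) ^+ 2.
Proof.
move=> r0 s0 h0 pyth; have [sr _ rsh] := right_triangle_le r0 s0 h0 pyth.
have [_ _ _ x2] := drift_offset_bounds rsh; rewrite -/x in x2.
have Kx := sqrt2M_drift_offset r s h; rewrite -/x in Kx; clearbody x.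
have Khx : Num.sqrt 2 * h * x = h * (h + s - r) by rewrite -Kx; ring.
have Kh2 : Num.sqrt 2 ^+ 2 * h ^+ 2 = 2 * h ^+ 2 by rewrite sqr_sqrtr.
have he : 0 <= r - s by rewrite subr_ge0.
have h5 : 0 <= 4 * h + (r - s) by lra.
have := mulr_ge0 he h5; nra.
Qed.

Lemma adversary_le_dec [r s] a U : 0 < r -> 0 <= s -> s <= r ->
  (a * r - U) ^+ 2 <= 3 * (a ^+ 2 * r ^+ 2 - 2 * a * U * s + U ^+ 2).
Proof.
move=> r0 s0 sr; have c1 : 0 <= r + 3 * s by lra.
have c2 : 0 <= r - s by lra.
have := mulr_ge0 c1 (sqr_ge0 (a * r - U)).
have := mulr_ge0 c2 (sqr_ge0 (a * r + U)).
nra.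
Qed.

Lemma adversary_le_inc [r s] a U : 0 < r -> 0 <= s -> 3 * s <= r ->
  (a * r + U) ^+ 2 <= 3 * (a ^+ 2 * r ^+ 2 - 2 * a * U * s + U ^+ 2).
Proof.
move=> r0 s0 sr; have c1 : 0 <= r + s by lra.
have c2 : 0 <= r - 3 * s by lra.
have := mulr_ge0 c1 (sqr_ge0 (a * r - U)).
have := mulr_ge0 c2 (sqr_ge0 (a * r + U)).
nra.
Qed.

Lemma adversary_le_far [r s h] a U : r ^+ 2 = s ^+ 2 + h ^+ 2 ->
  (U + a * (Num.sqrt 2 * h - s)) ^+ 2 <= 3 * (a ^+ 2 * r ^+ 2 - 2 * a * U * s + U ^+ 2).
Proof.
move=> pyth; have K2 : Num.sqrt 2 ^+ 2 = 2 :> R by rewrite sqr_sqrtr.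
rewrite -subr_ge0.
have -> : 3 * (a ^+ 2 * r ^+ 2 - 2 * a * U * s + U ^+ 2) - (U + a * (Num.sqrt 2 * h - s)) ^+ 2
    = (a * (h + Num.sqrt 2 * s) - Num.sqrt 2 * U) ^+ 2.
  rewrite pyth; apply/eqP; rewrite -subr_eq0; apply/eqP.
  transitivity ((2 - Num.sqrt 2 ^+ 2) * (a ^+ 2 * (h ^+ 2 + s ^+ 2) + U ^+ 2 - 2 * a * U * s)).
    ring.
  by rewrite K2 subrr mul0r.
exact: sqr_ge0.
Qed.

Lemma drift_far_bounds [r s h] (x := drift_offset r s h) :
  0 <= r -> 0 <= s -> 0 <= h -> r ^+ 2 = s ^+ 2 + h ^+ 2 -> r <= 3 * s ->
  0 <= Num.sqrt 2 * h - x /\ `|Num.sqrt 2 * h - s| <= r.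
Proof.
move=> r0 s0 h0 pyth r3s; have [sr _ rsh] := right_triangle_le r0 s0 h0 pyth.
have [x0 xe _ _] := drift_offset_bounds rsh; rewrite -/x in x0 xe.
have Kx := sqrt2M_drift_offset r s h; rewrite -/x in Kx; clearbody x.
have K2 : Num.sqrt 2 ^+ 2 = 2 :> R by rewrite sqr_sqrtr.
have K0 : 0 < Num.sqrt 2 :> R by rewrite sqrtr_gt0.
have Kh0 : 0 <= Num.sqrt 2 * h by rewrite pmulr_rge0.
split; first nra.
rewrite ler_norml; apply/andP; split; first lra.
rewrite lerBlDr -ler_sqr ?nnegrE ?addr_ge0 // exprMn K2.
have c1 : 0 <= 3 * s - r by rewrite subr_ge0.
have c2 : 0 <= r + s by rewrite addr_ge0.
have := mulr_ge0 c1 c2; nra.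
Qed.

(* Origin S, unit vector u along L' towards Pbar: Pbar = s u, P' = (s - x) u, A' = U u
   and A = a P, so that D = |P P'| and N = |A A'|. *)
Lemma drift_meet_potential_le r s h a U D N (x := drift_offset r s h) :
  0 < r -> 0 <= s -> 0 <= h -> r ^+ 2 = s ^+ 2 + h ^+ 2 ->
  D ^+ 2 = x ^+ 2 + h ^+ 2 -> 0 <= N -> N ^+ 2 = a ^+ 2 * r ^+ 2 - 2 * a * U * s + U ^+ 2 ->
  D + Num.sqrt 3 * `|s - x - U| <= Num.sqrt 3 * (`|1 - a| * r) + 3 * N.
Proof.
move=> r_gt0 s0 h0 pyth hD N0 hN; have r0 := ltW r_gt0.
have [sr hr rsh] := right_triangle_le r0 s0 h0 pyth.
have [x0 xe ex _] := drift_offset_bounds rsh; rewrite -/x in x0 xe ex.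
have move_le y : 0 <= y -> x ^+ 2 + h ^+ 2 <= 3 * y ^+ 2 -> D <= Num.sqrt 3 * y.
  by rewrite -hD; apply: ler_sqrt3M.
have adv_le y : y ^+ 2 <= 3 * (a ^+ 2 * r ^+ 2 - 2 * a * U * s + U ^+ 2) ->
    Num.sqrt 3 * y <= 3 * N.
  by rewrite -hN; apply: sqrt3M_le.
have scale_le y : `|y| <= r -> Num.sqrt 3 * ((1 - a) * y) <= Num.sqrt 3 * (`|1 - a| * r).
  move=> yr; rewrite ler_wpM2l ?sqrtr_ge0 //; apply: le_trans (ler_norm _) _.
  by rewrite normrM ler_wpM2l.
have r_norm : `|r| <= r by rewrite ger0_norm.
have [Uw | wU] := lerP U (s - x).
  have wr : 0 <= r - (s - x) by lra.
  have := move_le _ wr (drift_move_le_dec r0 s0 h0 pyth).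
  have := adv_le _ (adversary_le_dec a U r_gt0 s0 sr).
  have := scale_le r r_norm.
  lra.
have [s3r | r3s] := lerP (3 * s) r.
  have w0 : 0 <= r + (s - x) by lra.
  have := move_le _ w0 (drift_move_le_inc r0 s0 h0 pyth).
  have := adv_le _ (adversary_le_inc a U r_gt0 s0 s3r).
  have := scale_le r r_norm.
  lra.
have [far0 far_le] := drift_far_bounds r0 s0 h0 pyth (ltW r3s).
have := move_le _ far0 (drift_move_le_far r0 s0 h0 pyth).
have := adv_le _ (adversary_le_far a U pyth).
have := scale_le _ far_le.
rewrite -/x; lra.
Qed.

(* P = Pbar + n with h = |n|, A = P + mu u and A' = Pbar + nu u for a unit u along L'. *)
Lemma drift_parallel_potential_le h mu nu M :
  0 <= h -> 0 <= M -> M ^+ 2 = h ^+ 2 + (mu - nu) ^+ 2 ->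
  h + Num.sqrt 3 * `|nu| <= Num.sqrt 3 * `|mu| + 3 * M.
Proof.
move=> h0 M0 hM; have T2 : Num.sqrt 3 ^+ 2 = 3 :> R by rewrite sqr_sqrtr.
have T0 : 0 <= Num.sqrt 3 :> R := sqrtr_ge0 3.
have nu_le : `|nu| <= `|mu| + `|mu - nu|.
  by have := ler_normB mu (mu - nu); rewrite opprB addrC subrK.
set y := `|mu - nu| in nu_le.
have y0 : 0 <= y := normr_ge0 _.
have hy : h + Num.sqrt 3 * y <= 3 * M.
  have y2 : y ^+ 2 = (mu - nu) ^+ 2 by rewrite real_normK ?num_real.
  rewrite -ler_sqr ?nnegrE ?addr_ge0 ?mulr_ge0 // exprMn hM -y2.
  have := sqr_ge0 (Num.sqrt 3 * h - y); rewrite sqrrB sqrrD !exprMn T2.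
  nra.
have := ler_wpM2l T0 nu_le; lra.
Qed.

End DriftInequalities.

(** * Euclidean geometry of lines and planes *)

Section InnerProduct.
Context {R : realType} {d : nat}.
Implicit Types (u v w : 'rV[R]_d) (k : R).

Lemma dotpC u v : dotp u v = dotp v u.
Proof. by rewrite /dotp -[v in RHS]trmxK -trmx_mul [RHS]mxE. Qed.

Lemma dotpDl u v w : dotp (u + v) w = dotp u w + dotp v w.
Proof. by rewrite /dotp mulmxDl mxE. Qed.

Lemma dotpZl k u v : dotp (k *: u) v = k * dotp u v.
Proof. by rewrite /dotp -scalemxAl mxE. Qed.

Lemma dotpNl u v : dotp (- u) v = - dotp u v.
Proof. by rewrite -scaleN1r dotpZl mulN1r. Qed.

Lemma dotpBl u v w : dotp (u - v) w = dotp u w - dotp v w.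
Proof. by rewrite dotpDl dotpNl. Qed.

Lemma dotpDr u v w : dotp u (v + w) = dotp u v + dotp u w.
Proof. by rewrite dotpC dotpDl !(dotpC u). Qed.

Lemma dotpZr k u v : dotp u (k *: v) = k * dotp u v.
Proof. by rewrite dotpC dotpZl dotpC. Qed.

Lemma dotpNr u v : dotp u (- v) = - dotp u v.
Proof. by rewrite dotpC dotpNl dotpC. Qed.

Lemma dotpBr u v w : dotp u (v - w) = dotp u v - dotp u w.
Proof. by rewrite dotpC dotpBl !(dotpC u). Qed.

Lemma dotp0l u : dotp 0 u = 0.
Proof. by rewrite -(scale0r 0) dotpZl mul0r. Qed.

Lemma dotp0r u : dotp u 0 = 0.
Proof. by rewrite dotpC dotp0l. Qed.

Lemma dotppE u : dotp u u = \sum_j u 0 j ^+ 2.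
Proof. by rewrite /dotp mxE; apply: eq_bigr => j _; rewrite mxE expr2. Qed.

Lemma dotpp_ge0 u : 0 <= dotp u u.
Proof. by rewrite dotppE sumr_ge0 // => j _; rewrite sqr_ge0. Qed.

Lemma dotpp_eq0 u : (dotp u u == 0) = (u == 0).
Proof.
apply/idP/eqP => [|->]; last by rewrite dotp0l.
rewrite dotppE psumr_eq0 => [/allP u0|j _]; last exact: sqr_ge0.
apply/rowP => j; rewrite mxE; apply/eqP.
by rewrite -sqrf_eq0 (implyP (u0 j (mem_index_enum j))).
Qed.

Lemma dotpp_gt0 u : (0 < dotp u u) = (u != 0).
Proof. by rewrite lt_def dotpp_eq0 dotpp_ge0 andbT. Qed.

End InnerProduct.

Section EuclideanNorm.
Context {R : realType} {d : nat}.
Implicit Types (u v x y z : 'rV[R]_d) (k : R).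

Definition vnorm u := Num.sqrt (dotp u u).

Lemma vnorm_ge0 u : 0 <= vnorm u.
Proof. exact: sqrtr_ge0. Qed.

Lemma sqr_vnorm u : vnorm u ^+ 2 = dotp u u.
Proof. by rewrite sqr_sqrtr ?dotpp_ge0. Qed.

Lemma vnorm_unit [u] : dotp u u = 1 -> vnorm u = 1.
Proof. by rewrite /vnorm => ->; rewrite sqrtr1. Qed.

Lemma vnormZ k u : vnorm (k *: u) = `|k| * vnorm u.
Proof. by rewrite /vnorm dotpZl dotpZr mulrA -expr2 sqrtrM ?sqr_ge0 // sqrtr_sqr. Qed.

Lemma vnorm_sqr_eq u c : 0 <= c -> dotp u u = c ^+ 2 -> vnorm u = c.
Proof. by move=> c0 uc; rewrite /vnorm uc sqrtr_sqr ger0_norm. Qed.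

Lemma cauchy_schwarz u v : dotp u v ^+ 2 <= dotp u u * dotp v v.
Proof.
have [->|v0] := eqVneq v 0; first by rewrite !dotp0r expr0n mulr0.
have Vp : 0 < dotp v v by rewrite dotpp_gt0.
have := dotpp_ge0 (dotp v v *: u - dotp u v *: v).
rewrite !(dotpBl, dotpBr, dotpZl, dotpZr) (dotpC v u) => H.
have : 0 <= dotp v v * (dotp u u * dotp v v - dotp u v ^+ 2) by nra.
by rewrite pmulr_rge0 // subr_ge0.
Qed.

Lemma dotp_le_vnormM u v : dotp u v <= vnorm u * vnorm v.
Proof.
apply: le_trans (ler_norm _) _.
rewrite -ler_sqr ?nnegrE ?mulr_ge0 ?vnorm_ge0 // real_normK ?num_real //.
by rewrite exprMn !sqr_vnorm cauchy_schwarz.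
Qed.

Lemma vnormD_le u v : vnorm (u + v) <= vnorm u + vnorm v.
Proof.
rewrite -ler_sqr ?nnegrE ?addr_ge0 ?vnorm_ge0 // sqrrD !sqr_vnorm.
rewrite !(dotpDl, dotpDr) (dotpC v u); have := dotp_le_vnormM u v; lra.
Qed.

Lemma distE x y : dist x y = vnorm (x - y).
Proof. by []. Qed.

Lemma dist_ge0 x y : 0 <= dist x y.
Proof. exact: vnorm_ge0. Qed.

Lemma distxx x : dist x x = 0.
Proof. by rewrite distE subrr /vnorm dotp0l sqrtr0. Qed.

Lemma distC x y : dist x y = dist y x.
Proof. by rewrite !distE -opprB /vnorm dotpNl dotpC dotpNl opprK. Qed.

Lemma dist_triangle x y z : dist x z <= dist x y + dist y z.
Proof. by rewrite !distE -[x - z](subrKA y) vnormD_le. Qed.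

Lemma distD2l x y z : dist (x + y) (x + z) = vnorm (y - z).
Proof. by rewrite distE opprD addrACA subrr add0r. Qed.

Lemma distDr x y : dist x (x + y) = vnorm y.
Proof. by rewrite distC distE addrC addKr. Qed.

End EuclideanNorm.

Section Projection.
Context {R : realType} {d : nat}.
Implicit Types (e u w x y : 'rV[R]_d) (k : R).

Definition vproj e w := (dotp w e / dotp e e) *: e.

Lemma dotp_vproj_subl e w : dotp (w - vproj e w) e = 0.
Proof.
have [->|e0] := eqVneq e 0; first by rewrite dotp0r.
by rewrite dotpBl dotpZl divfK ?subrr // dotpp_eq0.
Qed.

Lemma vprojB e x y : vproj e (x - y) = vproj e x - vproj e y.
Proof. by rewrite /vproj dotpBl mulrBl scalerBl. Qed.

Lemma vprojZ e k : vproj e (k *: e) = k *: e.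
Proof.
have [->|e0] := eqVneq e 0; first by rewrite !scaler0 /vproj scaler0.
by rewrite /vproj dotpZl mulfK // dotpp_eq0.
Qed.

Lemma vproj_unit u w : dotp u u = 1 -> vproj u w = dotp w u *: u.
Proof. by rewrite /vproj => ->; rewrite divr1. Qed.

Lemma vproj_scale k e w : k != 0 -> vproj (k *: e) w = vproj e w.
Proof.
move=> k0; have [->|e0] := eqVneq e 0; first by rewrite scaler0.
rewrite /vproj !dotpZl !dotpZr scalerA; congr (_ *: _); field.
by rewrite dotpp_eq0 e0.
Qed.

Lemma dotp_vproj2_le e1 e2 w (p := vproj e1 w + vproj e2 w) :
  dotp e1 e2 = 0 -> dotp p p <= dotp w w.
Proof.
move=> e12; set q := w - p.
have q1 : dotp q e1 = 0.
  by rewrite /q /p opprD addrA dotpBl dotp_vproj_subl dotpZl (dotpC e2) e12 mulr0 subr0.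
have q2 : dotp q e2 = 0.
  by rewrite /q /p opprD addrA addrAC dotpBl dotp_vproj_subl dotpZl e12 mulr0 subr0.
have qp : dotp q p = 0 by rewrite /p dotpDr !dotpZr q1 q2 !mulr0 addr0.
have -> : dotp w w = dotp (q + p) (q + p) by rewrite /q subrK.
clearbody q p; rewrite dotpDl !dotpDr qp (dotpC p q) qp addr0 add0r lerDr.
exact: dotpp_ge0.
Qed.

End Projection.

Section Lines.
Context {R : realType} {d : nat}.
Implicit Types (L : line R d) (p q x z S P : 'rV[R]_d).

Lemma on_line_shift [L p] x :
  on_line L p -> on_line L x <-> exists t, x = p + t *: L.2.
Proof.
move=> [tp ->]; split=> [[t ->]|[t ->]].
  by exists (t - tp); rewrite -addrA -scalerDl [tp + _]addrC subrK.
by exists (tp + t); rewrite scalerDl addrA.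
Qed.

Lemma on_line_through [L p q z] : on_line L p -> on_line L q -> p != q ->
  on_line L z -> exists a, z = p + a *: (q - p).
Proof.
move=> Lp /(on_line_shift _ Lp) [tq ->] pq /(on_line_shift _ Lp) [tz ->].
have tq0 : tq != 0 by apply: contraNneq pq => ->; rewrite scale0r addr0.
by exists (tz / tq); rewrite addrAC subrr add0r scalerA divfK.
Qed.

Lemma proj_line_on L x : on_line L (proj_line L x).
Proof. by exists (dotp (x - L.1) L.2 / dotp L.2 L.2). Qed.

Lemma proj_line_shift [L S] x :
  on_line L S -> proj_line L x = S + vproj L.2 (x - S).
Proof.
move=> [t ->]; rewrite opprD addrA vprojB vprojZ.
by rewrite -addrA [t *: _ + _]addrC subrK.
Qed.

Lemma drift_point_on_line L S P Pb :
  on_line L S -> on_line L Pb -> on_line L (drift_point S P Pb).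
Proof.
move=> LS /(on_line_shift _ LS) [t ->]; apply/(on_line_shift _ LS).
rewrite /drift_point; case: ifP => _; first by exists 0; rewrite scale0r addr0.
by rewrite [S + _ - S]addrC addKr scalerA; eexists.
Qed.

Lemma dotp_plane_normal L P : dotp (plane_normal L P) L.2 = 0.
Proof.
by rewrite /plane_normal /proj_line -/(vproj _ _) opprD addrA dotp_vproj_subl.
Qed.

Lemma plane_normal_neq0 L P : ~ on_line L P -> plane_normal L P != 0.
Proof.
move=> LP; apply/eqP => /eqP; rewrite subr_eq0 => /eqP PE.
by apply: LP; rewrite PE; exact: proj_line_on.
Qed.

End Lines.

Section Plane.
Context {R : realType} {d : nat}.
Implicit Types (L : line R d) (e w x y P : 'rV[R]_d) (k : R).

Lemma vprojZD e k w : dotp w e = 0 -> vproj e (k *: e + w) = k *: e.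
Proof. by move=> we; rewrite /vproj dotpDl we addr0; exact: vprojZ. Qed.

Lemma on_plane_base L P : on_plane L P P.
Proof. by exists 0, 0; rewrite !scale0r !addr0. Qed.

Lemma on_plane_line [L] P [x] : on_line L x -> on_plane L P x.
Proof.
move=> /(on_line_shift _ (proj_line_on L P)) [t ->].
by exists t, (-1); rewrite scaleN1r /plane_normal opprB [RHS]addrAC [P + _]addrC subrK.
Qed.

Lemma on_plane_dir [L P L0] : (forall x, on_line L0 x -> on_plane L P x) ->
  exists g1 g2, L0.2 = g1 *: L.2 + g2 *: plane_normal L P.
Proof.
move=> L0U.
have [a1 [b1 e1]] : on_plane L P L0.1 by apply: L0U; exists 0; rewrite scale0r addr0.
have [a2 [b2 e2]] : on_plane L P (L0.1 + L0.2) by apply: L0U; exists 1; rewrite scale1r.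
exists (a2 - a1), (b2 - b1).
by rewrite -(addKr L0.1 L0.2) e2 e1; apply/rowP => i; rewrite !mxE; ring.
Qed.

Lemma proj_plane_on L P y : on_plane L P (proj_plane L P y).
Proof. by rewrite /proj_plane /proj_dir; do 2 eexists; rewrite addrA. Qed.

Lemma proj_plane_id [L P x] : on_plane L P x -> proj_plane L P x = x.
Proof.
move=> [a [b ->]]; set n := plane_normal L P; set w := a *: L.2 + b *: n.
have nf : dotp n L.2 = 0 := dotp_plane_normal L P.
rewrite -addrA -/w /proj_plane /proj_dir -/n [P + w - P]addrC addKr; congr (_ + _).
change (vproj L.2 w + vproj n w = w); rewrite /w [X in vproj n X]addrC.
by rewrite !vprojZD // dotpZl ?nf ?(dotpC L.2) ?nf mulr0.
Qed.

Lemma dist_proj_plane_le L P x y :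
  dist (proj_plane L P x) (proj_plane L P y) <= dist x y.
Proof.
set n := plane_normal L P; rewrite /proj_plane distD2l.
change (vnorm (vproj L.2 (x - P) + vproj n (x - P) - (vproj L.2 (y - P) + vproj n (y - P)))
  <= dist x y).
have xy : x - P - (y - P) = x - y by rewrite opprB addrA subrK.
rewrite opprD addrACA -!vprojB xy distE /vnorm ler_sqrt ?dotpp_ge0 //.
by apply: dotp_vproj2_le; rewrite dotpC dotp_plane_normal.
Qed.

End Plane.

(** * One step of Drift and of ExtDrift *)

Section Drift.
Context {R : realType} {d : nat}.
Implicit Types (f u v S : 'rV[R]_d) (a U : R).

Lemma unit_dir [f] v : f != 0 ->
  exists u c, [/\ dotp u u = 1, 0 <= dotp v u, c != 0 & f = c *: u].
Proof.
move=> f0; have F0 : 0 < vnorm f by rewrite sqrtr_gt0 dotpp_gt0.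
set c := if 0 <= dotp v f then vnorm f else - vnorm f.
have c_sqr : c ^+ 2 = dotp f f by rewrite /c -sqr_vnorm; case: ifP; rewrite ?sqrrN.
have c_neq0 : c != 0 by rewrite -sqrf_eq0 c_sqr dotpp_eq0.
exists (c^-1 *: f), c; split=> //; last by rewrite scalerA divff // scale1r.
  by rewrite dotpZl dotpZr mulrA -expr2 exprVn c_sqr mulVf // dotpp_eq0.
rewrite dotpZr /c; case: ifP => [vf|/negbT]; first by rewrite pmulr_rge0 ?invr_gt0.
by rewrite -ltNge => vf; rewrite invrN mulNr -mulrN pmulr_rge0 ?invr_gt0 // oppr_ge0 ltW.
Qed.

Lemma pythagoras_unit [u] v : dotp u u = 1 ->
  vnorm v ^+ 2 = dotp v u ^+ 2 + vnorm (v - dotp v u *: u) ^+ 2.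
Proof.
move=> u1; rewrite !sqr_vnorm !(dotpBl, dotpBr, dotpZl, dotpZr) u1 (dotpC u v).
ring.
Qed.

Lemma drift_point_unit S u v (s := dotp v u) (h := vnorm (v - s *: u)) :
  dotp u u = 1 -> 0 <= s ->
  drift_point S (S + v) (S + s *: u) = S + (s - drift_offset (vnorm v) s h) *: u.
Proof.
move=> u1 s0; rewrite /drift_point !distDr distD2l vnormZ vnorm_unit // mulr1.
rewrite ger0_norm // -/h -/(drift_offset (vnorm v) s h) [S + _ - S]addrC addKr scalerA.
have [s_eq0|sn0] := eqVneq s 0; last by rewrite mulfVK.
have hr : vnorm v = h.
  apply: vnorm_sqr_eq; first exact: vnorm_ge0.
  by rewrite -sqr_vnorm (pythagoras_unit v u1) -/s -/h s_eq0 expr0n add0r.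
by rewrite s_eq0 /drift_offset -hr addr0 subrr !mul0r subrr scale0r addr0.
Qed.

Lemma drift_meet_potential S u v a U (s := dotp v u)
    (P' := drift_point S (S + v) (S + s *: u)) :
  dotp u u = 1 -> 0 <= s -> v != 0 ->
  dist (S + v) P' + Num.sqrt 3 * dist P' (S + U *: u)
    <= Num.sqrt 3 * dist (S + v) (S + a *: v) + 3 * dist (S + a *: v) (S + U *: u).
Proof.
move=> u1 s0 v0; rewrite /P' drift_point_unit // -/s !distD2l.
set r := vnorm v; set h := vnorm (v - s *: u); set x := drift_offset r s h.
have pyth : r ^+ 2 = s ^+ 2 + h ^+ 2 := pythagoras_unit v u1.
have vsq : dotp v v = r ^+ 2 by rewrite sqr_vnorm.
rewrite -[(s - x) *: u - _]scalerBl vnormZ (vnorm_unit u1) mulr1.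
have -> : v - a *: v = (1 - a) *: v by rewrite scalerBl scale1r.
rewrite vnormZ -/r.
apply: drift_meet_potential_le; rewrite ?vnorm_ge0 //.
- by rewrite sqrtr_gt0 dotpp_gt0.
- rewrite sqr_vnorm !(dotpBl, dotpBr, dotpZl, dotpZr) u1 (dotpC u v) -/s vsq pyth -/x; ring.
- rewrite sqr_vnorm !(dotpBl, dotpBr, dotpZl, dotpZr) u1 (dotpC u v) -/s vsq; ring.
Qed.

End Drift.

Section PlanarStep.
Context {R : realType} {d : nat}.
Implicit Types (L : line R d) (S P A : 'rV[R]_d).

Lemma drift_meet_step_potential [L0 L S P A A'] (P' := drift_point S P (proj_line L P)) :
  is_line L -> ~ on_line L P -> on_line L0 S -> on_line L S -> on_line L0 P ->
  on_line L0 A -> on_line L A' ->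
  dist P P' + Num.sqrt 3 * dist P' A' <= Num.sqrt 3 * dist P A + 3 * dist A A'.
Proof.
move=> f0 LP L0S LS L0P L0A LA'.
have SP : S != P by apply: contraPneq LP => <-.
have [a ->] := on_line_through L0S L0P SP L0A.
have [u [c [u1 s0 c0 fE]]] := unit_dir (P - S) f0.
have [t ->] := (on_line_shift _ LS).1 LA'.
rewrite /P' (proj_line_shift _ LS) fE vproj_scale // vproj_unit // scalerA.
have v0 : P - S != 0 by rewrite subr_eq0 eq_sym.
have := drift_meet_potential S u (P - S) a (t * c) u1 s0 v0.
by rewrite [S + (P - S)]addrC subrK.
Qed.

Lemma drift_parallel_step_potential [L P A A' mu] (Pb := proj_line L P) :
  A = P + mu *: L.2 -> on_line L A' ->
  dist P Pb + Num.sqrt 3 * dist Pb A' <= Num.sqrt 3 * dist P A + 3 * dist A A'.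
Proof.
move=> -> /(on_line_shift _ (proj_line_on L P)) [nu ->]; rewrite -/Pb.
set f := L.2; set n := plane_normal L P.
have nf : dotp n f = 0 := dotp_plane_normal L P.
have -> : P = Pb + n by rewrite /n /plane_normal addrC subrK.
clearbody n; rewrite [dist (Pb + n) Pb]distC !distDr -addrA distD2l !vnormZ.
rewrite -(ger0_norm (vnorm_ge0 f)) -!normrM.
apply: drift_parallel_potential_le; rewrite ?vnorm_ge0 //.
rewrite -mulrBl exprMn !sqr_vnorm.
rewrite !(dotpDl, dotpDr, dotpNl, dotpNr, dotpZl, dotpZr) (dotpC f n) nf; ring.
Qed.

Lemma parallel_line_off [L0 L P S g] :
  L0.2 = g *: L.2 -> on_line L0 P -> ~ on_line L P -> on_line L0 S -> ~ on_line L S.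
Proof.
move=> gE L0P LP /(on_line_shift _ L0P) [t ->] LS; apply: LP.
apply/(on_line_shift _ LS); exists (- (t * g)).
by rewrite gE scalerA scaleNr addrK.
Qed.

Lemma plane_lines_meet [L0 L P g1 g2] :
  L0.2 = g1 *: L.2 + g2 *: plane_normal L P -> g2 != 0 -> on_line L0 P -> ~ on_line L P ->
  exists S, [/\ on_line L0 S, on_line L S & forall S', on_line L0 S' -> on_line L S' -> S' = S].
Proof.
move=> gE g20 L0P LP; set n := plane_normal L P in gE *; set Pb := proj_line L P.
have LPb : on_line L Pb := proj_line_on L P.
have nf : dotp n L.2 = 0 := dotp_plane_normal L P.
have N0 : dotp n n != 0 by rewrite dotpp_eq0 plane_normal_neq0.
have PE : P = Pb + n by rewrite /n /plane_normal addrC subrK.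
clearbody n Pb; subst P.
exists (Pb + n - g2^-1 *: L0.2); split.
- by apply/(on_line_shift _ L0P); exists (- g2^-1); rewrite scaleNr.
- apply/(on_line_shift _ LPb); exists (- (g1 / g2)).
  by rewrite gE scalerDr !scalerA mulVf // scale1r; apply/rowP => i; rewrite !mxE; field.
move=> S' /(on_line_shift _ L0P) [t ->] /(on_line_shift _ LPb) [t' eS'].
have ht : n + t *: L0.2 = t' *: L.2 by apply: (addrI Pb); rewrite addrA eS'.
have : dotp (n + t *: L0.2) n = 0 by rewrite ht dotpZl dotpC nf mulr0.
rewrite dotpDl dotpZl gE dotpDl !dotpZl dotpC nf mulr0 add0r => E.
have /eqP : dotp n n * (t * g2 + 1) = 0 by rewrite -E; ring.
rewrite mulf_eq0 (negbTE N0) /= addr_eq0 => /eqP tg.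
by rewrite -(mulfK g20 t) tg mulN1r scaleNr.
Qed.

Lemma drift_step_potential [L0 L P P' A A'] :
  is_line L -> ~ on_line L P -> on_line L0 P -> on_line L0 A ->
  (forall x, on_line L0 x -> on_plane L P x) -> on_line L A' ->
  drift_step L0 P L P' ->
  dist P P' + Num.sqrt 3 * dist P' A' <= Num.sqrt 3 * dist P A + 3 * dist A A'.
Proof.
move=> f0 LP L0P L0A L0U LA' [Hpar Hmeet].
have [g1 [g2 gE]] := on_plane_dir L0U.
have [g20|g20] := eqVneq g2 0; last first.
  have [S [L0S LS Suniq]] := plane_lines_meet gE g20 L0P LP.
  by rewrite (Hmeet S L0S LS Suniq); exact: drift_meet_step_potential f0 LP L0S LS L0P L0A LA'.
rewrite g20 scale0r addr0 in gE.
rewrite Hpar; last by move=> [S [L0S LS _]]; exact: parallel_line_off gE L0P LP L0S LS.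
have [t ->] := (on_line_shift _ L0P).1 L0A.
by apply: (drift_parallel_step_potential (mu := t * g1)); rewrite // gE scalerA.
Qed.

End PlanarStep.

Section ExtDrift.
Context {R : realType} {d : nat}.
Implicit Types (L : line R d) (x P A : 'rV[R]_d).

Lemma prev_line_in_plane_on [L P L' L0 A] (A0 := proj_plane L' P A) :
  prev_line_in_plane L P L' L0 -> on_line L P -> on_line L A ->
  [/\ on_line L0 P, on_line L0 A0 & forall x, on_line L0 x -> on_plane L' P x].
Proof.
move=> [_ [Hdeg Hline]] LP LA.
have [[y Ly yE]|ndeg] := pselect (exists2 y, on_line L y &
    forall z, on_line L z -> proj_plane L' P z = proj_plane L' P y).
  have [L0P L0U] := Hdeg (ex_intro2 _ _ y Ly yE).
  suff -> : A0 = P by [].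
  by rewrite /A0 yE // -(yE P LP) (proj_plane_id (on_plane_base _ _)).
have L0E := Hline ndeg; split.
- by apply/L0E; exists P; rewrite ?(proj_plane_id (on_plane_base _ _)).
- by apply/L0E; exists A.
- by move=> x /L0E [y _ ->]; exact: proj_plane_on.
Qed.

Lemma extdrift_step_on_line L P L' P' : extdrift_step L P L' P' -> on_line L' P'.
Proof.
move=> [Hstay Hmove]; have [L'P|L'P] := pselect (on_line L' P); first by rewrite Hstay.
have [L0 [_ [Hpar Hmeet]]] := Hmove L'P.
have [[S [L0S L'S Suniq]]|nomeet] := pselect (exists S, [/\ on_line L0 S, on_line L' S &
    forall S', on_line L0 S' -> on_line L' S' -> S' = S]).
  by rewrite (Hmeet S L0S L'S Suniq); apply: drift_point_on_line (proj_line_on _ _).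
by rewrite Hpar; [exact: proj_line_on | exact: nomeet].
Qed.

Lemma extdrift_step_potential L P L' P' A A' :
  is_line L' -> on_line L P -> on_line L A -> on_line L' A' -> extdrift_step L P L' P' ->
  dist P P' + Num.sqrt 3 * dist P' A' <= Num.sqrt 3 * dist P A + 3 * dist A A'.
Proof.
move=> f0 LP LA LA' [Hstay Hmove]; have T0 := sqrtr_ge0 (3 : R).
have [L'P|L'P] := pselect (on_line L' P).
  rewrite Hstay // distxx add0r.
  have T3 : Num.sqrt 3 <= 3 :> R by rewrite -ler_sqr ?nnegrE // sqr_sqrtr //; lra.
  have := ler_wpM2l T0 (dist_triangle P A A').
  have := ler_wpM2r (dist_ge0 A A') T3; lra.
have [L0 [L0_prev Hdrift]] := Hmove L'P.
have [L0P L0A0 L0U] := prev_line_in_plane_on L0_prev LP LA.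
have := drift_step_potential f0 L'P L0P L0A0 L0U LA' Hdrift.
have dPA := dist_proj_plane_le L' P P A; rewrite (proj_plane_id (on_plane_base L' P)) in dPA.
have dAA := dist_proj_plane_le L' P A A'.
rewrite (proj_plane_id (on_plane_line P LA')) in dAA.
have := ler_wpM2l T0 dPA; have := ler_wpM2l (ler0n R 3) dAA; lra.
Qed.

End ExtDrift.

Lemma amortized_sum_le {R : numDomainType} (c o phi : nat -> R) {k : R} {m : nat} :
  phi 0%N = 0 -> 0 <= phi m ->
  (forall t, (t < m)%N -> c t + phi t.+1 <= phi t + k * o t) ->
  \sum_(t < m) c t <= k * \sum_(t < m) o t.
Proof.
move=> phi0 phim step.
have : \sum_(t < m) c t <= \sum_(t < m) (phi t - phi t.+1 + k * o t).
  by apply: ler_sum => t _; rewrite addrAC lerBrDr step.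
have tele : \sum_(t < m) (phi t - phi t.+1) = phi 0%N - phi m.
  rewrite -opprB -(telescope_sumr _ (leq0n m)) big_mkord -sumrN.
  by apply: eq_bigr => t _; rewrite opprB.
rewrite big_split /= -mulr_sumr tele phi0 sub0r => /le_trans; apply.
by rewrite gerDr oppr_le0.
Qed.

Theorem mainTheorem2 (R : realType) (d : nat) (hd : (2 <= d)%N)
  (P0 : 'rV[R]_d) (m : nat) (X : nat -> line R d) (P : nat -> 'rV[R]_d) :
  (forall t, (1 <= t <= m)%N -> is_line (X t)) ->
  extdrift_run P0 m X P ->
  forall A : nat -> 'rV[R]_d, A 0%N = P0 ->
    (forall t, (1 <= t <= m)%N -> on_line (X t) (A t)) ->
    path_cost m P <= 3 * path_cost m A.
Proof.
move=> HX [P0E [L1 [_ L1P0 step]]] A A0E HA.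
pose Y t := if t == 0%N then L1 else X t.
have onY_P t : (t < m)%N -> on_line (Y t) (P t).
  case: t => [|t] tm; first by rewrite /Y P0E.
  exact: extdrift_step_on_line (step t (ltnW tm)).
have onY_A t : (t < m)%N -> on_line (Y t) (A t).
  case: t => [|t] tm; first by rewrite /Y A0E.
  by apply: HA; rewrite /= ltnW.
pose phi t := Num.sqrt 3 * dist (P t) (A t).
apply: (amortized_sum_le (fun t => dist (P t) (P t.+1)) (fun t => dist (A t) (A t.+1)) phi).
- by rewrite /phi P0E A0E distxx mulr0.
- by rewrite /phi mulr_ge0 ?sqrtr_ge0 ?dist_ge0.
move=> t tm; apply: extdrift_step_potential (step t tm) => //.
- by apply: HX; rewrite tm.
- exact: onY_P.
- exact: onY_A.
- by apply: HA; rewrite tm.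
Qed.
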